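(* Let $\mu(s)=\inf_{\varphi\in\mathcal{A}}E(\varphi;s)$ for $s>0$. Then $\mu(s)\le sC_1-C_2$ for all $s>0$, where $$C_1=3\delta R^3\Big(\int_0^R\varrho_0(z)z^4dz\Big)^{-1}>0,\qquad C_2=\Big(\int_0^R(12-9\gamma)K\varrho_0^\gamma(z)z^2dz\Big)\Big(\int_0^R\varrho_0(z)z^4dz\Big)^{-1}>0.$$ In particular $\mu(s)<0$ for all sufficiently small $s>0$.
   Context: Fix constants $\varepsilon>0$, $\delta>0$, $K>0$ and $6/5<\gamma<4/3$. Let $\varrho_0:[0,R]\to[0,\infty)$ be a Lane–Emden stationary density of radius $R>0$: $\varrho_0$ is smooth and positive on $[0,R)$, $\varrho_0(R)=0$, $P_0:=K\varrho_0^\gamma$ satisfies $\partial_z P_0(z)=-\frac{4\pi\varrho_0(z)}{z^2}\int_0^z\varrho_0(y)y^2\,dy$, and $\varrho_0(z)$ is comparable to $(R-z)^{1/(\gamma-1)}$ for $z$ near $R$. $H^1_2((0,R))$ is the completion of $\{u\in C^\infty([0,R]):u(0)=0\}$ in the norm $\|u\|^2=\int_0^R\frac{|u'|^2+|u|^2}{z^2}dz$. For $s>0$ and $\varphi\in H^1_2((0,R))$ define $$E(\varphi;s)=s\int_0^R\Big(\delta\frac{|\partial_z\varphi|^2}{z^2}+\frac{4\varepsilon}{3z^2}\Big|\partial_z\varphi-3\frac{\varphi}{z}\Big|^2\Big)dz+\int_0^R\Big(\gamma P_0\frac{|\partial_z\varphi|^2}{z^2}+4\frac{\partial_zP_0}{z^3}|\varphi|^2\Big)dz,$$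 $J(\varphi)=\int_0^R\frac{\varrho_0}{z^2}|\varphi|^2dz$, and $\mathcal{A}=\{\varphi\in H^1_2((0,R)):J(\varphi)=1\}$. *)

From Stdlib Require Import Reals Lra.
Open Scope R_scope.

Definition is_RInt (f : R -> R) (a b l : R) : Prop :=
  exists pr : Riemann_integrable f a b, RiemannInt pr = l.

Definition is_IInt0 (f : R -> R) (Rr l : R) : Prop :=
  forall e, 0 < e -> exists d, 0 < d /\
    forall a, 0 < a -> a < d -> a < Rr ->
      exists l', is_RInt f a Rr l' /\ Rabs (l' - l) < e.

(* x^y for x >= 0 (with 0^y = 0 for y > 0). *)
Definition rpow (x y : R) : R := if Rle_dec x 0 then 0 else Rpower x y.

(* f is C^infinity on the set P, with D n its n-th derivative
   (f : R -> R is an extension; derivatives are two-sided). *)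
Definition smooth_on (P : R -> Prop) (f : R -> R) (D : nat -> R -> R) : Prop :=
  (forall z, P z -> D 0%nat z = f z) /\
  (forall n z, P z -> derivable_pt_lim (D n) z (D (S n) z)).

Definition P0 (K gam : R) (rho0 : R -> R) (z : R) : R := K * rpow (rho0 z) gam.

(* E(phi; s) = e, where dphi = phi' and dP0 = d/dz P_0 *)
Definition E_val (eps delta K gam Rr : R) (rho0 dP0 : R -> R) (s : R)
    (phi dphi : R -> R) (e : R) : Prop :=
  exists I1 I2,
    is_IInt0 (fun z => delta * (dphi z)^2 / z^2
                       + 4 * eps / (3 * z^2) * (dphi z - 3 * phi z / z)^2) Rr I1 /\
    is_IInt0 (fun z => gam * P0 K gam rho0 z * (dphi z)^2 / z^2
                       + 4 * dP0 z / z^3 * (phi z)^2) Rr I2 /\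
    e = s * I1 + I2.

Definition J_val (rho0 : R -> R) (Rr : R) (phi : R -> R) (j : R) : Prop :=
  is_IInt0 (fun z => rho0 z / z^2 * (phi z)^2) Rr j.

(* The set { E(phi;s) : phi in A } with phi ranging over the dense core
   { u smooth on [0,Rr], u(0) = 0, finite H^1_2 norm }. *)
Definition energy_values (eps delta K gam Rr : R) (rho0 dP0 : R -> R) (s : R)
    (e : R) : Prop :=
  exists (phi : R -> R) (D : nat -> R -> R),
    smooth_on (fun z => 0 <= z <= Rr) phi D /\ phi 0 = 0 /\
    (exists nrm, is_IInt0 (fun z => ((D 1%nat z)^2 + (phi z)^2) / z^2) Rr nrm) /\
    J_val rho0 Rr phi 1 /\
    E_val eps delta K gam Rr rho0 dP0 s phi (D 1%nat) e.

(* inf S <= c  (in the extended reals): every lower bound of S is <= c *)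
Definition inf_le (S : R -> Prop) (c : R) : Prop :=
  forall m, (forall e, S e -> m <= e) -> m <= c.

Definition inf_lt (S : R -> Prop) (c : R) : Prop :=
  exists e, S e /\ e < c.

From Pilot Require Import Defs.
From Stdlib Require Import Reals Lra.
From Coquelicot Require Coquelicot.
Open Scope R_scope.

(* The bound is witnessed by the single trial function phi(z) = c z^3.  For it
   d/dz phi - 3 phi / z vanishes, so the viscous term drops out; the remaining
   s-dependent term integrates to 3 delta c^2 R^3, and J(phi) = c^2 int rho0 z^4.
   In the potential term, 9 gamma c^2 P0 z^2 + 4 c^2 P0' z^3, we integrate by
   parts, int_0^R P0' z^3 = - 3 int_0^R P0 z^2 (the boundary term vanishes since
   P0(R) = 0), which gives - c^2 (12 - 9 gamma) int P0 z^2.  Choosing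
   c = (int rho0 z^4)^(-1/2) makes J(phi) = 1 and E(phi; s) = s C1 - C2. *)

(* Coquelicot is imported only inside this module, so that [is_RInt] in the
   final statement still denotes the Riemann integral of Defs. *)
Module LaneEmdenTrial.
Import Coquelicot.Coquelicot.

Lemma Defs_is_RInt_of (f : R -> R) a b l :
  a <= b -> is_RInt f a b l -> Defs.is_RInt f a b l.
Proof.
  intros Hab Hf.
  assert (Hex : ex_RInt f a b) by (exists l; exact Hf).
  exists (ex_RInt_Reals_0 _ _ _ Hex).
  rewrite <- RInt_Reals. exact (is_RInt_unique _ _ _ _ Hf).
Qed.

Lemma is_RInt_of_Defs (f : R -> R) a b l : Defs.is_RInt f a b l -> is_RInt f a b l.
Proof.
  intros [pr <-]. rewrite <- RInt_Reals.
  apply (RInt_correct (V := R_CompleteNormedModule)), ex_RInt_Reals_1, pr.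
Qed.

Lemma locally_interval (P : R -> Prop) x d :
  0 < d -> (forall y, x - d < y < x + d -> P y) -> locally x P.
Proof.
  intros Hd HP. exists (mkposreal d Hd). intros y Hy.
  destruct (Rabs_def2 (y - x) d Hy). apply HP. lra.
Qed.

Lemma ex_RInt_continuous_R (f : R -> R) a b :
  (forall x, Rmin a b <= x <= Rmax a b -> continuous f x) -> ex_RInt f a b.
Proof. apply (ex_RInt_continuous (V := R_CompleteNormedModule)). Qed.

(* Two functions continuous at b that agree on (a, b) agree at b:
   both are limits from the left of the same function. *)
Lemma continuous_agree_left (P Q : R -> R) a b :
  a < b -> continuous P b -> continuous Q b ->
  (forall y, a < y < b -> P y = Q y) -> P b = Q b.
Proof.
  intros Hab HP HQ Heq.
  apply (filterlim_locally_unique (F := at_left b) P).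
  - exact (filterlim_filter_le_1 _ (filter_le_within _) HP).
  - apply (filterlim_ext_loc Q).
    + apply (locally_interval _ b (b - a)); [lra|].
      intros y Hy Hyb. symmetry. apply Heq. lra.
    + exact (filterlim_filter_le_1 _ (filter_le_within _) HQ).
Qed.

(* Fundamental theorem of calculus when F' = f is only known on [a, b):
   continuity of F at b suffices.  Needed because P0' is given only on (0, R). *)
Lemma is_RInt_derive_left_open (F f : R -> R) a b :
  a < b -> (forall x, a <= x < b -> is_derive F x (f x)) -> continuous F b ->
  (forall x, a <= x -> continuous f x) -> is_RInt f a b (F b - F a).
Proof.
  intros Hab HF HFb Hf.
  assert (Hex : forall y, a <= y -> ex_RInt f a y).
  { intros y Hy. apply ex_RInt_continuous_R. intros x Hx.
    apply Hf. rewrite Rmin_left in Hx by lra. lra. }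
  assert (Hagree : forall y, a < y < b -> RInt f a y = F y - F a).
  { intros y Hy. apply is_RInt_unique, (is_RInt_derive (V := R_CompleteNormedModule)).
    - intros x Hx. rewrite Rmin_left, Rmax_right in Hx by lra. apply HF. lra.
    - intros x Hx. rewrite Rmin_left in Hx by lra. apply Hf. lra. }
  assert (Hcont : continuous (fun y => RInt f a y) b).
  { apply (continuous_RInt_1 f a b).
    apply (locally_interval _ b (b - a)); [lra|]. intros y Hy.
    apply (RInt_correct (V := R_CompleteNormedModule)), Hex. lra. }
  assert (Hb : RInt f a b = F b - F a).
  { apply (continuous_agree_left (fun y => RInt f a y) (fun y => F y - F a) a b Hab Hcont).
    - apply (continuous_minus F (fun _ => F a)); [exact HFb | apply continuous_const].
    - exact Hagree. }
  rewrite <- Hb. apply (RInt_correct (V := R_CompleteNormedModule)), Hex. lra.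
Qed.

Lemma is_IInt0_of_primitive (f F : R -> R) Rr l :
  0 < Rr -> (forall a, 0 < a < Rr -> is_RInt f a Rr (F a)) ->
  continuous F 0 -> F 0 = l -> is_IInt0 f Rr l.
Proof.
  intros HR HF HF0 <- e He.
  apply continuity_pt_filterlim in HF0.
  destruct (HF0 e He) as [d [Hd Hclose]].
  exists d. split; [exact Hd|]. intros a Ha Had HaR. exists (F a). split.
  - apply Defs_is_RInt_of; [lra|]. apply HF. lra.
  - apply Hclose. split; [split; [exact I | lra]|].
    simpl; unfold Rdist. rewrite Rabs_right; lra.
Qed.

Lemma is_IInt0_of_antiderivative (f Fp fp : R -> R) Rr l :
  0 < Rr -> (forall x, is_derive Fp x (fp x)) -> (forall x, continuous fp x) ->
  (forall x, 0 < x < Rr -> f x = fp x) -> Fp Rr - Fp 0 = l -> is_IInt0 f Rr l.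
Proof.
  intros HR HFp Hfp Hf Hl.
  apply (is_IInt0_of_primitive f (fun a => Fp Rr - Fp a)); auto.
  - intros a Ha. apply (is_RInt_ext fp).
    + intros x Hx. rewrite Rmin_left, Rmax_right in Hx by lra. symmetry. apply Hf. lra.
    + apply (is_RInt_derive (V := R_CompleteNormedModule)); auto.
  - apply (continuous_minus (fun _ => Fp Rr) Fp); [apply continuous_const|].
    apply (ex_derive_continuous Fp). exists (fp 0). apply HFp.
Qed.

Lemma continuous_RInt_lower (g : R -> R) b x :
  (forall y, continuous g y) -> continuous (fun a => RInt g a b) x.
Proof.
  intros Hg. apply (ex_derive_continuous (fun a => RInt g a b)).
  eexists. apply (is_derive_RInt' g (fun a => RInt g a b) x b); [|apply Hg].
  apply filter_forall. intros y.
  apply (RInt_correct (V := R_CompleteNormedModule)), ex_RInt_continuous_R.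
  intros; apply Hg.
Qed.

Lemma Rpower_lt_of_lt_root p e y :
  0 < p -> 0 < e -> 0 < y < Rpower e (/ p) -> Rpower y p < e.
Proof.
  intros Hp He Hy.
  replace e with (Rpower (Rpower e (/ p)) p).
  - apply Rlt_Rpower_l; lra.
  - rewrite Rpower_mult, Rinv_l by lra. apply Rpower_1; lra.
Qed.

(* x |-> x^g (extended by 0 on x <= 0) is continuous for g > 0; in
   particular P0 is continuous wherever rho0 is, including at the surface. *)
Lemma rpow_continuous g u : 0 < g -> continuous (fun x => rpow x g) u.
Proof.
  intros Hg. destruct (Rtotal_order u 0) as [Hu | [-> | Hu]].
  - apply (continuous_ext_loc _ (fun _ => 0)); [|apply continuous_const].
    apply (locally_interval _ u (- u)); [lra|]. intros y Hy. unfold rpow.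
    destruct (Rle_dec y 0) as [_ | Hy0]; [reflexivity | lra].
  - apply filterlim_locally. intros [e He]. simpl.
    apply (locally_interval _ 0 (Rpower e (/ g))); [apply exp_pos|].
    intros y Hy. change (Rabs (rpow y g - rpow 0 g) < e).
    unfold rpow. destruct (Rle_dec 0 0) as [_ | N]; [|lra].
    destruct (Rle_dec y 0) as [_ | Hy0]; [rewrite Rminus_0_r, Rabs_R0; exact He|].
    rewrite Rminus_0_r, Rabs_right by (left; apply exp_pos).
    apply Rpower_lt_of_lt_root; lra.
  - apply (continuous_ext_loc _ (fun x => Rpower x g)).
    + apply (locally_interval _ u u); [lra|]. intros y Hy. unfold rpow.
      destruct (Rle_dec y 0) as [Hy0 | _]; [lra | reflexivity].
    + apply continuity_pt_filterlim, derivable_continuous_pt.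
      exists (g * Rpower u (g - 1)). apply derivable_pt_lim_power; lra.
Qed.

Lemma power_bound_vanishes_left (rho : R -> R) b c p eta :
  0 < c -> 0 < p -> 0 < eta ->
  (forall z, b - eta < z < b -> 0 <= rho z <= c * Rpower (b - z) p) ->
  filterlim rho (at_left b) (locally 0).
Proof.
  intros Hc Hp Heta Hbound. apply filterlim_locally. intros [e He]. simpl.
  apply (locally_interval _ b (Rmin eta (Rpower (e / c) (/ p)))).
  { apply Rmin_glb_lt; [lra | apply exp_pos]. }
  intros y Hy Hyb.
  assert (Hmin1 := Rmin_l eta (Rpower (e / c) (/ p))).
  assert (Hmin2 := Rmin_r eta (Rpower (e / c) (/ p))).
  destruct (Hbound y) as [Hlo Hhi]; [lra|].
  assert (Hsmall : Rpower (b - y) p < e / c).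
  { apply Rpower_lt_of_lt_root; [lra | apply Rdiv_lt_0_compat; lra | lra]. }
  change (Rabs (rho y - 0) < e). rewrite Rminus_0_r, Rabs_right by lra.
  apply (Rmult_lt_compat_l c) in Hsmall; [|lra].
  replace (c * (e / c)) with e in Hsmall by (field; lra). lra.
Qed.

Lemma smooth_on_interval_extension (f : R -> R) (D : nat -> R -> R) a b :
  a < b -> smooth_on (fun z => a <= z < b) f D ->
  filterlim f (at_left b) (locally (f b)) ->
  exists g : R -> R, (forall x, continuous g x) /\ (forall x, a <= x <= b -> g x = f x).
Proof.
  intros Hab [HD0 HD] Hleft.
  assert (HD0_cont : forall x, a <= x < b -> continuous (D 0%nat) x).
  { intros x Hx. apply continuity_pt_filterlim, derivable_continuous_pt.
    exists (D 1%nat x). apply HD, Hx. }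
  assert (Hnear : forall x, a <= x < b -> a < x ->
            locally x (fun y => D 0%nat y = f y)).
  { intros x Hx Hax. apply (locally_interval _ x (Rmin (x - a) (b - x))).
    { apply Rmin_glb_lt; lra. }
    intros y Hy. apply HD0.
    assert (H1 := Rmin_l (x - a) (b - x)). assert (H2 := Rmin_r (x - a) (b - x)). lra. }
  assert (Hinterior : forall c, a < c < b -> filterlim f (locally c) (locally (f c))).
  { intros c Hc. apply (continuous_ext_loc f (D 0%nat)); [apply Hnear; lra |].
    apply HD0_cont. lra. }
  assert (Hright : filterlim f (at_right a) (locally (f a))).
  { rewrite <- (HD0 a) by lra. apply (filterlim_ext_loc (D 0%nat)).
    - apply (locally_interval _ a (b - a)); [lra|]. intros y Hy Hay. apply HD0. lra.
    - apply (filterlim_filter_le_1 _ (filter_le_within _)), HD0_cont. lra. }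
  destruct (C0_extension_lt f (f a) (f b) a b Hab Hinterior Hright Hleft)
    as [g [Hg [Hgf [Hga Hgb]]]].
  exists g. split; [exact Hg|].
  intros x Hx. destruct (Req_dec x a) as [-> | Hxa]; [exact Hga|].
  destruct (Req_dec x b) as [-> | Hxb]; [exact Hgb|]. apply Hgf. lra.
Qed.

Lemma continuous_mult_pow (g : R -> R) n x :
  continuous g x -> continuous (fun z => g z * z ^ n) x.
Proof.
  intros Hg. apply (continuous_mult g (fun z => z ^ n)); [exact Hg|].
  apply (ex_derive_continuous (fun z => z ^ n)). auto_derive. exact I.
Qed.

Definition cubic_derivs (c : R) (n : nat) (z : R) : R :=
  match n with
  | 0%nat => c * z ^ 3
  | 1%nat => 3 * c * z ^ 2
  | 2%nat => 6 * c * z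
  | 3%nat => 6 * c
  | _ => 0
  end.

Lemma cubic_smooth (P : R -> Prop) c : smooth_on P (fun z => c * z ^ 3) (cubic_derivs c).
Proof.
  split; [intros; reflexivity|]. intros n z _.
  destruct n as [|[|[|[|n]]]]; unfold cubic_derivs; try apply derivable_pt_lim_const;
    apply is_derive_Reals; auto_derive; try exact I; ring.
Qed.

Lemma cubic_norm_finite c Rr : 0 < Rr ->
  exists nrm, is_IInt0 (fun z => ((cubic_derivs c 1 z) ^ 2 + (c * z ^ 3) ^ 2) / z ^ 2) Rr nrm.
Proof.
  intros HR. eexists.
  apply (is_IInt0_of_antiderivative _ (fun z => 3 * c * c * z ^ 3 + c * c * z ^ 5 / 5)
           (fun z => 9 * c * c * z ^ 2 + c * c * z ^ 4)); [exact HR | | | | reflexivity].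
  - intros x. auto_derive; [exact I | field].
  - intros x. apply (ex_derive_continuous (fun z => 9 * c * c * z ^ 2 + c * c * z ^ 4)).
    auto_derive. exact I.
  - intros x Hx. simpl. field. lra.
Qed.

(* The s-dependent part of E at the trial function: the viscous term vanishes
   identically because d/dz (c z^3) = 3 (c z^3) / z. *)
Lemma cubic_dissipation eps delta c Rr : 0 < Rr ->
  is_IInt0 (fun z => delta * (3 * c * z ^ 2) ^ 2 / z ^ 2
                     + 4 * eps / (3 * z ^ 2) * (3 * c * z ^ 2 - 3 * (c * z ^ 3) / z) ^ 2)
           Rr (3 * delta * (c * c) * Rr ^ 3).
Proof.
  intros HR.
  apply (is_IInt0_of_antiderivative _ (fun z => 3 * delta * (c * c) * z ^ 3)
           (fun z => 9 * delta * (c * c) * z ^ 2)); [exact HR | | | | ring].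
  - intros x. auto_derive; [exact I | ring].
  - intros x. apply (ex_derive_continuous (fun z => 9 * delta * (c * c) * z ^ 2)).
    auto_derive. exact I.
  - intros x Hx. field. lra.
Qed.

(* The Lane-Emden density extends continuously to R: it vanishes at the
   surface like (R - z)^(1/(gamma-1)). *)
Lemma lane_emden_density_extension (gam Rr : R) (rho0 : R -> R) (Drho : nat -> R -> R) :
  1 < gam -> 0 < Rr -> smooth_on (fun z => 0 <= z < Rr) rho0 Drho ->
  (forall z, 0 <= z < Rr -> 0 < rho0 z) -> rho0 Rr = 0 ->
  (exists c1 c2 eta, 0 < c1 /\ 0 < c2 /\ 0 < eta /\
      forall z, Rr - eta < z < Rr ->
        c1 * Rpower (Rr - z) (1 / (gam - 1)) <= rho0 z /\
        rho0 z <= c2 * Rpower (Rr - z) (1 / (gam - 1))) ->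
  exists rhoE : R -> R,
    (forall x, continuous rhoE x) /\ (forall z, 0 <= z <= Rr -> rhoE z = rho0 z).
Proof.
  intros Hgam HR Hsmooth Hpos Hedge [c1 [c2 [eta [_ [Hc2 [Heta Hbound]]]]]].
  apply (smooth_on_interval_extension _ Drho 0 Rr HR Hsmooth). rewrite Hedge.
  apply (power_bound_vanishes_left rho0 Rr c2 (1 / (gam - 1)) (Rmin eta Rr));
    [exact Hc2 | apply Rdiv_lt_0_compat; lra | apply Rmin_glb_lt; lra |].
  intros z Hz. assert (H1 := Rmin_l eta Rr). assert (H2 := Rmin_r eta Rr).
  split; [left; apply Hpos; lra | apply Hbound; lra].
Qed.

(* PE, mass and dPE are the pressure, the
   enclosed mass and the hydrostatic pressure gradient built from rhoE. *)
Section TrialEnergy.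

Variables (K gam Rr : R) (rho0 dP0 rhoE : R -> R).
Hypothesis HK : 0 < K.
Hypothesis Hgam : 0 < gam.
Hypothesis HR : 0 < Rr.
Hypothesis rhoE_continuous : forall x, continuous rhoE x.
Hypothesis rhoE_eq : forall z, 0 <= z <= Rr -> rhoE z = rho0 z.
Hypothesis rho0_pos : forall z, 0 <= z < Rr -> 0 < rho0 z.
Hypothesis rho0_edge : rho0 Rr = 0.
Hypothesis dP0_derivative :
  forall z, 0 < z < Rr -> derivable_pt_lim (P0 K gam rho0) z (dP0 z).
Hypothesis dP0_hydrostatic : forall z, 0 < z < Rr -> exists m,
  Defs.is_RInt (fun y => rho0 y * y ^ 2) 0 z m /\ dP0 z = - (4 * PI * rho0 z / z ^ 2) * m.

Definition PE (z : R) : R := K * rpow (rhoE z) gam.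
Definition mass (z : R) : R := RInt (fun y => rhoE y * y ^ 2) 0 z.
Definition dPE (z : R) : R := - (4 * PI * rhoE z / z ^ 2) * mass z.
Definition density_moment : R := RInt (fun z => rhoE z * z ^ 4) 0 Rr.
Definition pressure_moment : R := RInt (fun z => PE z * z ^ 2) 0 Rr.

Lemma PE_continuous x : continuous PE x.
Proof.
  apply (continuous_mult (fun _ => K) (fun z => rpow (rhoE z) gam)); [apply continuous_const|].
  apply (continuous_comp rhoE (fun u => rpow u gam)); [apply rhoE_continuous|].
  apply rpow_continuous, Hgam.
Qed.

Lemma PE_eq z : 0 <= z <= Rr -> PE z = P0 K gam rho0 z.
Proof. intros Hz. unfold PE, P0. rewrite rhoE_eq by exact Hz. reflexivity. Qed.

Lemma PE_edge : PE Rr = 0.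
Proof.
  rewrite PE_eq by lra. unfold P0, rpow. rewrite rho0_edge.
  destruct (Rle_dec 0 0); [ring | lra].
Qed.

Lemma ex_RInt_PE_moment a b : ex_RInt (fun z => PE z * z ^ 2) a b.
Proof. apply ex_RInt_continuous_R. intros. apply continuous_mult_pow, PE_continuous. Qed.

Lemma dPE_continuous z : 0 < z -> continuous dPE z.
Proof.
  intros Hz. apply (continuous_mult (fun z => - (4 * PI * rhoE z / z ^ 2)) mass).
  - apply (continuous_opp (fun z => 4 * PI * rhoE z / z ^ 2)).
    apply (continuous_mult (fun z => 4 * PI * rhoE z) (fun z => / z ^ 2)).
    + apply (continuous_mult (fun _ => 4 * PI) rhoE); [apply continuous_const | apply rhoE_continuous].
    + apply (ex_derive_continuous (fun z => / z ^ 2)). auto_derive. intros H0. nra.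
  - apply (continuous_RInt_1 (fun y => rhoE y * y ^ 2) 0 z mass).
    apply filter_forall. intros y.
    apply (RInt_correct (V := R_CompleteNormedModule)), ex_RInt_continuous_R.
    intros. apply continuous_mult_pow, rhoE_continuous.
Qed.

Lemma dP0_eq_dPE z : 0 < z < Rr -> dP0 z = dPE z.
Proof.
  intros Hz. destruct (dP0_hydrostatic z Hz) as [m [Hm ->]].
  unfold dPE. rewrite rhoE_eq by lra. f_equal. symmetry.
  apply is_RInt_unique, (is_RInt_ext (fun y => rho0 y * y ^ 2)), is_RInt_of_Defs, Hm.
  intros y Hy. rewrite Rmin_left, Rmax_right in Hy by lra. rewrite rhoE_eq by lra. reflexivity.
Qed.

Lemma pressure_moment_by_parts a : 0 < a < Rr ->
  is_RInt (fun z => dPE z * z ^ 3) a Rr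
          (- PE a * a ^ 3 - 3 * RInt (fun z => PE z * z ^ 2) a Rr).
Proof.
  intros Ha.
  assert (Hderiv : forall x, a <= x < Rr ->
            is_derive (fun z => PE z * z ^ 3) x (dPE x * x ^ 3 + 3 * (PE x * x ^ 2))).
  { intros x Hx.
    apply (is_derive_ext_loc (fun z => P0 K gam rho0 z * z ^ 3)).
    { apply (locally_interval _ x (Rmin x (Rr - x))); [apply Rmin_glb_lt; lra|].
      intros y Hy. assert (H1 := Rmin_l x (Rr - x)). assert (H2 := Rmin_r x (Rr - x)).
      rewrite PE_eq; [reflexivity|]. lra. }
    apply is_derive_Reals.
    assert (D := derivable_pt_lim_mult _ _ x _ _
                   (dP0_derivative x ltac:(lra)) (derivable_pt_lim_pow x 3)).
    replace (dPE x * x ^ 3 + 3 * (PE x * x ^ 2))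
      with (dP0 x * x ^ 3 + P0 K gam rho0 x * (INR 3 * x ^ Nat.pred 3)); [exact D|].
    rewrite dP0_eq_dPE, PE_eq by lra. simpl. ring. }
  assert (Hcont : forall x, a <= x ->
            continuous (fun z => dPE z * z ^ 3 + 3 * (PE z * z ^ 2)) x).
  { intros x Hx.
    apply (continuous_plus (fun z => dPE z * z ^ 3) (fun z => 3 * (PE z * z ^ 2))).
    - apply continuous_mult_pow, dPE_continuous. lra.
    - apply (continuous_scal_r 3 (fun z => PE z * z ^ 2)), continuous_mult_pow, PE_continuous. }
  assert (Hfull := is_RInt_derive_left_open (fun z => PE z * z ^ 3) _ a Rr ltac:(lra)
                     Hderiv (continuous_mult_pow _ _ _ (PE_continuous Rr)) Hcont).
  assert (Hmoment := is_RInt_scal _ _ _ 3 _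
                       (RInt_correct (V := R_CompleteNormedModule) _ _ _ (ex_RInt_PE_moment a Rr))).
  assert (Hdiff := is_RInt_minus _ _ _ _ _ _ Hfull Hmoment).
  cbv beta in Hdiff. rewrite PE_edge in Hdiff.
  apply (is_RInt_ext (fun z => minus (dPE z * z ^ 3 + 3 * (PE z * z ^ 2)) (scal 3 (PE z * z ^ 2)))).
  - intros x _. unfold minus, plus, opp, scal; simpl; unfold mult; simpl. ring.
  - replace (- PE a * a ^ 3 - 3 * RInt (fun z => PE z * z ^ 2) a Rr)
      with (minus (0 * Rr ^ 3 - PE a * a ^ 3) (scal 3 (RInt (fun z => PE z * z ^ 2) a Rr)));
      [exact Hdiff | unfold minus, plus, opp, scal; simpl; unfold mult; simpl; ring].
Qed.

Lemma cubic_potential_energy c :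
  is_IInt0 (fun z => gam * P0 K gam rho0 z * (3 * c * z ^ 2) ^ 2 / z ^ 2
                     + 4 * dP0 z / z ^ 3 * (c * z ^ 3) ^ 2)
           Rr (- (12 - 9 * gam) * (c * c) * pressure_moment).
Proof.
  set (Q a := RInt (fun z => PE z * z ^ 2) a Rr).
  apply (is_IInt0_of_primitive _ (fun a => 9 * gam * (c * c) * Q a
                                         + 4 * (c * c) * (- PE a * a ^ 3 - 3 * Q a)));
    [exact HR | | | unfold pressure_moment, Q; ring].
  - intros a Ha.
    assert (HQ := is_RInt_scal _ _ _ (9 * gam * (c * c)) _
                    (RInt_correct (V := R_CompleteNormedModule) _ _ _ (ex_RInt_PE_moment a Rr))).
    assert (Hparts := is_RInt_scal _ _ _ (4 * (c * c)) _ (pressure_moment_by_parts a Ha)).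
    eapply is_RInt_ext; [|exact (is_RInt_plus _ _ _ _ _ _ HQ Hparts)].
    intros x Hx. rewrite Rmin_left, Rmax_right in Hx by lra.
    unfold plus, scal; simpl; unfold mult; simpl.
    rewrite dP0_eq_dPE, <- PE_eq by lra. field. lra.
  - apply (continuous_plus (fun a => 9 * gam * (c * c) * Q a)
                           (fun a => 4 * (c * c) * (- PE a * a ^ 3 - 3 * Q a))).
    + apply (continuous_scal_r (9 * gam * (c * c)) Q), continuous_RInt_lower.
      intros. apply continuous_mult_pow, PE_continuous.
    + apply (continuous_scal_r (4 * (c * c)) (fun a => - PE a * a ^ 3 - 3 * Q a)).
      apply (continuous_minus (fun a => - PE a * a ^ 3) (fun a => 3 * Q a)).
      * apply continuous_mult_pow, (continuous_opp PE), PE_continuous.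
      * apply (continuous_scal_r 3 Q), continuous_RInt_lower.
        intros. apply continuous_mult_pow, PE_continuous.
Qed.

Lemma cubic_mass c : J_val rho0 Rr (fun z => c * z ^ 3) (c * c * density_moment).
Proof.
  apply (is_IInt0_of_primitive _ (fun a => c * c * RInt (fun z => rhoE z * z ^ 4) a Rr));
    [exact HR | | | reflexivity].
  - intros a Ha.
    assert (Hm := is_RInt_scal _ _ _ (c * c) _ (RInt_correct (V := R_CompleteNormedModule) _ _ _
                    (ex_RInt_continuous_R (fun z => rhoE z * z ^ 4) a Rr
                       (fun x _ => continuous_mult_pow _ _ _ (rhoE_continuous x))))).
    eapply is_RInt_ext; [|exact Hm]. intros x Hx. rewrite Rmin_left, Rmax_right in Hx by lra.
    unfold scal; simpl; unfold mult; simpl. rewrite rhoE_eq by lra. field. lra.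
  - apply (continuous_scal_r (c * c) (fun a => RInt (fun z => rhoE z * z ^ 4) a Rr)).
    apply continuous_RInt_lower. intros. apply continuous_mult_pow, rhoE_continuous.
Qed.

Lemma density_moment_pos : 0 < density_moment.
Proof.
  apply RInt_gt_0; [exact HR | |intros; apply continuous_mult_pow, rhoE_continuous].
  intros x Hx. rewrite rhoE_eq by lra.
  apply Rmult_lt_0_compat; [apply rho0_pos; lra | apply pow_lt; lra].
Qed.

Lemma pressure_moment_pos : 0 < pressure_moment.
Proof.
  apply RInt_gt_0; [exact HR | |intros; apply continuous_mult_pow, PE_continuous].
  intros x Hx. apply Rmult_lt_0_compat; [|apply pow_lt; lra].
  unfold PE, rpow. rewrite rhoE_eq by lra.
  destruct (Rle_dec (rho0 x) 0) as [Hle | _]; [|apply Rmult_lt_0_compat; [exact HK | apply exp_pos]].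
  assert (0 < rho0 x) by (apply rho0_pos; lra). lra.
Qed.

Lemma density_moment_eq I4 :
  Defs.is_RInt (fun z => rho0 z * z ^ 4) 0 Rr I4 -> density_moment = I4.
Proof.
  intros HI4. apply is_RInt_unique.
  apply (is_RInt_ext (fun z => rho0 z * z ^ 4)), is_RInt_of_Defs, HI4.
  intros x Hx. rewrite Rmin_left, Rmax_right in Hx by lra. rewrite rhoE_eq by lra. reflexivity.
Qed.

Lemma pressure_moment_eq I2 :
  Defs.is_RInt (fun z => (12 - 9 * gam) * K * rpow (rho0 z) gam * z ^ 2) 0 Rr I2 ->
  I2 = (12 - 9 * gam) * pressure_moment.
Proof.
  intros HI2. apply is_RInt_of_Defs in HI2. rewrite <- (is_RInt_unique _ _ _ _ HI2).
  apply is_RInt_unique. eapply is_RInt_ext; [|exact (is_RInt_scal _ _ _ (12 - 9 * gam) _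
    (RInt_correct (V := R_CompleteNormedModule) _ _ _ (ex_RInt_PE_moment 0 Rr)))].
  intros x Hx. rewrite Rmin_left, Rmax_right in Hx by lra.
  unfold scal; simpl; unfold mult; simpl. rewrite PE_eq by lra. unfold P0. ring.
Qed.

Lemma cubic_energy_value eps delta s c : c * c * density_moment = 1 ->
  energy_values eps delta K gam Rr rho0 dP0 s
    (s * (3 * delta * (c * c) * Rr ^ 3) - (12 - 9 * gam) * (c * c) * pressure_moment).
Proof.
  intros Hnorm. exists (fun z => c * z ^ 3), (cubic_derivs c).
  split; [apply cubic_smooth|]. split; [ring|]. split; [exact (cubic_norm_finite c Rr HR)|].
  split; [rewrite <- Hnorm; apply cubic_mass|].
  exists (3 * delta * (c * c) * Rr ^ 3), (- (12 - 9 * gam) * (c * c) * pressure_moment).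
  split; [exact (cubic_dissipation eps delta c Rr HR)|].
  split; [exact (cubic_potential_energy c) | ring].
Qed.

Lemma normalized_cubic_energy_value eps delta s :
  energy_values eps delta K gam Rr rho0 dP0 s
    (s * (3 * delta * Rr ^ 3 / density_moment)
     - (12 - 9 * gam) * pressure_moment / density_moment).
Proof.
  assert (HM := density_moment_pos).
  set (c := / sqrt density_moment).
  assert (Hcc : c * c = / density_moment).
  { unfold c. rewrite <- Rinv_mult, sqrt_sqrt by lra. reflexivity. }
  replace (s * (3 * delta * Rr ^ 3 / density_moment)
           - (12 - 9 * gam) * pressure_moment / density_moment)
    with (s * (3 * delta * (c * c) * Rr ^ 3) - (12 - 9 * gam) * (c * c) * pressure_moment)
    by (rewrite Hcc; field; lra).
  apply cubic_energy_value. rewrite Hcc. field. lra.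
Qed.

End TrialEnergy.

End LaneEmdenTrial.

Theorem lemma2p7 (eps delta K gam Rr : R) (rho0 dP0 : R -> R)
    (Drho : nat -> R -> R) (I4 I2 : R) :
  0 < eps -> 0 < delta -> 0 < K -> 6/5 < gam < 4/3 -> 0 < Rr ->
  (* Lane-Emden stationary density of radius Rr *)
  smooth_on (fun z => 0 <= z < Rr) rho0 Drho ->
  (forall z, 0 <= z < Rr -> 0 < rho0 z) ->
  rho0 Rr = 0 ->
  (forall z, 0 < z < Rr -> derivable_pt_lim (P0 K gam rho0) z (dP0 z)) ->
  (forall z, 0 < z < Rr -> exists m,
      is_RInt (fun y => rho0 y * y^2) 0 z m /\
      dP0 z = - (4 * PI * rho0 z / z^2) * m) ->
  (exists c1 c2 eta, 0 < c1 /\ 0 < c2 /\ 0 < eta /\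
      forall z, Rr - eta < z < Rr ->
        c1 * Rpower (Rr - z) (1 / (gam - 1)) <= rho0 z /\
        rho0 z <= c2 * Rpower (Rr - z) (1 / (gam - 1))) ->
  (* the integrals defining C1 and C2 *)
  is_RInt (fun z => rho0 z * z^4) 0 Rr I4 ->
  is_RInt (fun z => (12 - 9 * gam) * K * rpow (rho0 z) gam * z^2) 0 Rr I2 ->
  let C1 := 3 * delta * Rr^3 / I4 in
  let C2 := I2 / I4 in
  0 < C1 /\ 0 < C2 /\
  (forall s, 0 < s ->
     inf_le (energy_values eps delta K gam Rr rho0 dP0 s) (s * C1 - C2)) /\
  (exists s0, 0 < s0 /\ forall s, 0 < s < s0 ->
     inf_lt (energy_values eps delta K gam Rr rho0 dP0 s) 0).
Proof.
  intros _ Hdelta HK Hgam HR Hsmooth Hpos Hedge Hderiv Hhydro Hbound HI4 HI2 C1 C2.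
  destruct (LaneEmdenTrial.lane_emden_density_extension gam Rr rho0 Drho
              ltac:(lra) HR Hsmooth Hpos Hedge Hbound) as [rhoE [Hcont HrhoE]].
  assert (HM := LaneEmdenTrial.density_moment_pos Rr rho0 rhoE HR Hcont HrhoE Hpos).
  assert (HQ := LaneEmdenTrial.pressure_moment_pos K gam Rr rho0 rhoE HK ltac:(lra) HR Hcont HrhoE Hpos).
  rewrite (LaneEmdenTrial.density_moment_eq Rr rho0 rhoE HR HrhoE I4 HI4) in HM.
  assert (Hvalue : forall s, energy_values eps delta K gam Rr rho0 dP0 s (s * C1 - C2)).
  { intros s. unfold C1, C2.
    rewrite <- (LaneEmdenTrial.density_moment_eq Rr rho0 rhoE HR HrhoE I4 HI4),
            (LaneEmdenTrial.pressure_moment_eq K gam Rr rho0 rhoE ltac:(lra) HR Hcont HrhoE I2 HI2).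
    apply LaneEmdenTrial.normalized_cubic_energy_value; auto; lra. }
  assert (HC1 : 0 < C1).
  { apply Rdiv_lt_0_compat; [apply Rmult_lt_0_compat; [lra | apply pow_lt] |]; lra. }
  assert (HC2 : 0 < C2).
  { unfold C2. rewrite (LaneEmdenTrial.pressure_moment_eq K gam Rr rho0 rhoE ltac:(lra) HR Hcont HrhoE I2 HI2).
    apply Rdiv_lt_0_compat; [apply Rmult_lt_0_compat |]; lra. }
  split; [exact HC1|]. split; [exact HC2|]. split.
  - intros s _ m Hlower. apply Hlower, Hvalue.
  - exists (C2 / C1). split; [apply Rdiv_lt_0_compat; lra|].
    intros s [Hs Hs0]. exists (s * C1 - C2). split; [apply Hvalue|].
    apply (Rmult_lt_compat_r C1) in Hs0; [|exact HC1].
    replace (C2 / C1 * C1) with C2 in Hs0 by (field; lra). lra.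
Qed.
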